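(* For every positive integer $n$ there are vectors $v,w\in E_8$ with $\langle v,v\rangle=\langle w,w\rangle=2n$ and $\langle v,w\rangle=2n-1$.
   Context: $E_8$ denotes the unique even unimodular positive definite lattice of rank $8$, with bilinear form $\langle\cdot,\cdot\rangle$. *)

From HB Require Import structures.
From mathcomp Require Import all_boot all_order all_algebra.
Set Implicit Arguments. Unset Strict Implicit. Unset Printing Implicit Defensive.
Import Order.TTheory GRing.Theory Num.Theory.
Local Open Scope ring_scope.

Definition E8_form (v w : 'rV[rat]_8) : rat := \sum_(i < 8) v ord0 i * w ord0 i.

Definition in_E8 (v : 'rV[rat]_8) : Prop :=
  ((forall i, v ord0 i \is a Num.int) \/
   (forall i, v ord0 i - 2^-1 \is a Num.int)) /\
  ((\sum_(i < 8) v ord0 i) / 2 \is a Num.int).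

From mathcomp Require Import all_boot all_order all_algebra.
From mathcomp Require Import zify ring.
Set Implicit Arguments. Unset Strict Implicit. Unset Printing Implicit Defensive.
Import Order.TTheory GRing.Theory Num.Theory.

(* By Lagrange's four-square theorem, 2n - 1 = a^2 + b^2 + c^2 + d^2. Then
   v = (a,b,c,d,1,0,0,0) and w = (a,b,c,d,0,1,0,0) have norm 2n and inner
   product 2n - 1, and they lie in E_8 because an integer vector has the same
   parity of coordinate sum and of norm. Lagrange's theorem is proved in the
   classical way: Euler's identity reduces it to primes p; a pigeonhole
   argument on x^2 and -1 - y^2 mod p gives a multiple m p with m < p that is a
   sum of four squares, and Euler's descent lowers m to 1. *)

Lemma injective_images_meet (A B C : finType) (f : A -> C) (g : B -> C) :
  injective f -> injective g -> #|C| < #|A| + #|B| -> exists a b, f a = g b.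
Proof.
move=> f_inj g_inj cardABC.
have : 0 < #|f @: A :&: g @: B|.
  rewrite lt0n; apply: contraTneq cardABC => cap0.
  by rewrite -(card_imset A f_inj) -(card_imset B g_inj) -cardsUI cap0 addn0 -leqNgt max_card.
rewrite card_gt0 => /set0Pn[c]; rewrite inE => /andP[/imsetP[a _ ->] /imsetP[b _ fab]].
by exists a, b.
Qed.

Lemma sqrn_mod_prime_inj p x y : prime p -> x <= p./2 -> y <= p./2 ->
  x ^ 2 = y ^ 2 %[mod p] -> x = y.
Proof.
move=> p_pr; wlog le_yx : x y / y <= x => [wlog_le|].
  by case: (leqP y x) => [|/ltnW] le_xy ? ? ?; [|symmetry]; apply: wlog_le.
move=> x_le y_le /eqP; rewrite eqn_mod_dvd ?leq_exp2r //.
have -> : x ^ 2 - y ^ 2 = (x - y) * (x + y) by nia.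
have p_gt1 := prime_gt1 p_pr; have p_half : p./2 * 2 <= p by lia.
rewrite Euclid_dvdM // => /orP[] /dvdn_leq; lia.
Qed.

Lemma prime_dvd_sum2sq_add1 p : prime p ->
  exists x y, [/\ x <= p./2, y <= p./2 & p %| x ^ 2 + y ^ 2 + 1].
Proof.
move=> p_pr; have p_gt0 := prime_gt0 p_pr.
have half_le (x : 'I_(p./2).+1) : x <= p./2 by rewrite -ltnS.
pose f (x : 'I_(p./2).+1) : 'I_p := Ordinal (ltn_pmod (x ^ 2) p_gt0).
have g_lt (y : 'I_(p./2).+1) : p.-1 - y ^ 2 %% p < p by lia.
pose g (y : 'I_(p./2).+1) : 'I_p := Ordinal (g_lt y).
have f_inj : injective f.
  by move=> a b [] /(sqrn_mod_prime_inj p_pr (half_le a) (half_le b)) /val_inj.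
have g_inj : injective g.
  move=> a b [] eq_ab; apply/val_inj/(sqrn_mod_prime_inj p_pr (half_le a) (half_le b)).
  by have := ltn_pmod (a ^ 2) p_gt0; have := ltn_pmod (b ^ 2) p_gt0; lia.
have [|x [y /(congr1 val) /= fg]] := injective_images_meet f_inj g_inj.
  by rewrite !card_ord; lia.
exists x, y; split; rewrite ?half_le //.
apply/dvdnP; exists (x ^ 2 %/ p + y ^ 2 %/ p + 1).
by have := divn_eq (x ^ 2) p; have := divn_eq (y ^ 2) p; have := ltn_pmod (y ^ 2) p_gt0; nia.
Qed.

Local Open Scope ring_scope.

Definition sum4sq (n : int) := exists a b c d : int, n = a ^+ 2 + b ^+ 2 + c ^+ 2 + d ^+ 2.

Lemma sum4sqM m n : sum4sq m -> sum4sq n -> sum4sq (m * n).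
Proof.
move=> [a1 [a2 [a3 [a4 ->]]]] [b1 [b2 [b3 [b4 ->]]]].
exists (a1 * b1 + a2 * b2 + a3 * b3 + a4 * b4), (a1 * b2 - a2 * b1 + a3 * b4 - a4 * b3),
  (a1 * b3 - a3 * b1 + a4 * b2 - a2 * b4), (a1 * b4 - a4 * b1 + a2 * b3 - a3 * b2).
ring.
Qed.

Lemma sqrz_mod2 x : (x ^+ 2 = x %[mod 2])%Z.
Proof. nia. Qed.

Lemma sum4sq_half n : sum4sq (2 * n) -> sum4sq n.
Proof.
have pair_up x y z w : 2 * n = x ^+ 2 + y ^+ 2 + z ^+ 2 + w ^+ 2 ->
    (x = y %[mod 2])%Z -> sum4sq n.
  move=> def xy; have zw : (z = w %[mod 2])%Z.
    by move: (sqrz_mod2 x) (sqrz_mod2 y) (sqrz_mod2 z) (sqrz_mod2 w); lia.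
  have [k defx] : exists k, x = y + k * 2 by exists (divz (x - y) 2); lia.
  have [l defz] : exists l, z = w + l * 2 by exists (divz (z - w) 2); lia.
  exists (y + k), k, (w + l), l; apply: (@mulfI _ 2) => //.
  by rewrite def defx defz; ring.
move=> [a [b [c [d def]]]].
have [ab|nab] := eqVneq (a %% 2)%Z (b %% 2)%Z; first exact: pair_up def ab.
have [ac|nac] := eqVneq (a %% 2)%Z (c %% 2)%Z.
  by apply: (pair_up a c b d); [rewrite def; ring | ].
by apply: (pair_up b c a d); [rewrite def; ring | lia].
Qed.

Lemma sqr_le_of_bounds (R : realDomainType) (h y : R) : - h <= y <= h -> y ^+ 2 <= h ^+ 2.
Proof.
rewrite -ler_norml => yh; rewrite -real_normK ?num_real //.
have h_ge0 : 0 <= h := le_trans (normr_ge0 y) yh.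
by rewrite ler_pXn2r ?nnegrE ?normr_ge0.
Qed.

Lemma centered_residue (h x : int) : 0 <= h ->
  exists q y, x = q * (2 * h + 1) + y /\ - h <= y <= h.
Proof.
move=> h_ge0; exists (divz (x + h) (2 * h + 1)), (modz (x + h) (2 * h + 1) - h); lia.
Qed.

Lemma sum4sq_descent_odd (m p : int) : 0 < m -> ~~ (2 %| m)%Z -> ~~ (m %| p)%Z ->
  sum4sq (m * p) -> exists2 r, 0 < r < m & sum4sq (r * p).
Proof.
move=> m_gt0 m_odd m_ndvd_p [x1 [x2 [x3 [x4 defmp]]]].
have [h defm h_ge0] : exists2 h, m = 2 * h + 1 & 0 <= h.
  have : (m %% 2 != 0)%Z by apply: contra m_odd => /eqP/dvdz_mod0P.
  by exists (divz m 2); lia.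
have [q1 [y1 [defx1 y1_bd]]] := centered_residue x1 h_ge0.
have [q2 [y2 [defx2 y2_bd]]] := centered_residue x2 h_ge0.
have [q3 [y3 [defx3 y3_bd]]] := centered_residue x3 h_ge0.
have [q4 [y4 [defx4 y4_bd]]] := centered_residue x4 h_ge0.
rewrite -defm in defx1 defx2 defx3 defx4.
pose r := p - (2 * y1 * q1 + m * q1 ^+ 2 + 2 * y2 * q2 + m * q2 ^+ 2
                + 2 * y3 * q3 + m * q3 ^+ 2 + 2 * y4 * q4 + m * q4 ^+ 2).
have defmr : m * r = y1 ^+ 2 + y2 ^+ 2 + y3 ^+ 2 + y4 ^+ 2.
  by rewrite /r mulrBr defmp defx1 defx2 defx3 defx4; ring.
have sqr_y_le : y1 ^+ 2 + y2 ^+ 2 + y3 ^+ 2 + y4 ^+ 2 <= 4 * h ^+ 2.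
  rewrite (_ : 4 * h ^+ 2 = h ^+ 2 + h ^+ 2 + h ^+ 2 + h ^+ 2); last by ring.
  by rewrite !lerD ?sqr_le_of_bounds.
have r_lt_m : r < m.
  rewrite -(ltr_pM2l m_gt0) defmr (le_lt_trans sqr_y_le) // defm.
  by clear -h_ge0; nia.
have r_gt0 : 0 < r.
  rewrite lt_neqAle -(pmulr_rge0 _ m_gt0) defmr; apply/andP; split; last first.
    by rewrite !addr_ge0 ?sqr_ge0.
  apply: contra m_ndvd_p => /eqP r0; apply/dvdzP.
  have y0 : y1 = 0 /\ y2 = 0 /\ y3 = 0 /\ y4 = 0.
    by move: defmr; rewrite -r0 mulr0; clear; nia.
  exists (q1 ^+ 2 + q2 ^+ 2 + q3 ^+ 2 + q4 ^+ 2); apply: (@mulfI _ m); first by rewrite gt_eqF.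
  by rewrite defmp defx1 defx2 defx3 defx4; case: y0 => -> [-> [-> ->]]; ring.
exists r; first by rewrite r_gt0.
(* Euler's identity for (m r) (m p) = (sum y_i^2) (sum x_i^2): as x_i = y_i mod m,
   each of its four squared terms is m times one of the witnesses below. *)
pose s := q1 * y1 + q2 * y2 + q3 * y3 + q4 * y4.
pose w2 := q1 * y2 - q2 * y1 + q3 * y4 - q4 * y3.
pose w3 := q1 * y3 - q3 * y1 + q4 * y2 - q2 * y4.
pose w4 := q1 * y4 - q4 * y1 + q2 * y3 - q3 * y2.
exists (r + s), w2, w3, w4; apply: (@mulfI _ (m ^+ 2)); first by rewrite expf_neq0 // gt_eqF.
rewrite (_ : _ * (r * p) = (m * r) * (m * p)); last by ring.
rewrite (_ : m ^+ 2 * _ = (m * r + m * s) ^+ 2 + (m * w2) ^+ 2 + (m * w3) ^+ 2 + (m * w4) ^+ 2);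
  last by ring.
by rewrite defmr defmp /s /w2 /w3 /w4 defx1 defx2 defx3 defx4; ring.
Qed.

Lemma sum4sq_descent (m p : int) : 1 < m -> ~~ (m %| p)%Z ->
  sum4sq (m * p) -> exists2 r, 0 < r < m & sum4sq (r * p).
Proof.
move=> m_gt1 m_ndvd_p; have [/dvdzP[k defm] | m_odd] := boolP (2 %| m)%Z; last first.
  by apply: sum4sq_descent_odd; rewrite ?(lt_trans ltr01).
rewrite defm (mulrC k) -mulrA => /sum4sq_half k_sum4sq.
by exists k => //; lia.
Qed.

Lemma sum4sq_prime_multiple p : prime p ->
  exists2 m : int, 0 < m < p%:Z & sum4sq (m * p%:Z).
Proof.
move=> p_pr; have p_gt1 := prime_gt1 p_pr.
have [x [y [x_le y_le /dvdnP[k def_k]]]] := prime_dvd_sum2sq_add1 p_pr.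
exists k%:Z.
  have : (k * p < p * p)%N by rewrite -def_k; nia.
  by rewrite ltn_pmul2r ?(ltnW p_gt1) //; nia.
by exists x%:Z, y%:Z, 1, 0; lia.
Qed.

Lemma sum4sq_prime p : prime p -> sum4sq p%:Z.
Proof.
move=> p_pr; have [m /andP[m_gt0 m_lt_p]] := sum4sq_prime_multiple p_pr.
have [k m_le_k] : exists k : nat, m <= k%:Z by exists `|m|%N; lia.
elim: k m m_le_k m_gt0 m_lt_p => [|k IHk] m m_le_k m_gt0 m_lt_p; first by lia.
have [-> | m_neq1] := eqVneq m 1; first by rewrite mul1r.
have m_ndvd_p : ~~ (m %| p%:Z)%Z.
  by rewrite dvdzE absz_nat; apply: contraL m_lt_p => /(prime_nt_dvdP p_pr); lia.
case/(sum4sq_descent _ m_ndvd_p) => [|r /andP[r_gt0 r_lt_m]]; first by lia.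
by apply: IHk => //; lia.
Qed.

Lemma four_squares n : sum4sq n%:Z.
Proof.
elim/ltn_ind: n => n IHn; have [n_le1 | n_gt1] := leqP n 1.
  by case: n n_le1 {IHn} => [|[|]] // _; [exists 0, 0, 0, 0 | exists 1, 0, 0, 0].
have pdiv_gt1 := prime_gt1 (pdiv_prime n_gt1).
rewrite -(divnK (pdiv_dvd n)) PoszM; apply: sum4sqM; last exact/sum4sq_prime/pdiv_prime.
by apply: IHn; rewrite ltn_Pdiv // ltnW.
Qed.

Lemma dvdz2_sum_sqr_sub (I : finType) (u : I -> int) :
  (2 %| \sum_i u i * u i - \sum_i u i)%Z.
Proof.
rewrite -sumrB; apply: rpred_sum => i _.
by rewrite -eqz_mod_dvd -expr2; apply/eqP/sqrz_mod2.
Qed.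

Lemma E8_form_intr (u v : 'rV[int]_8) :
  E8_form (map_mx intr u) (map_mx intr v) = (\sum_i u ord0 i * v ord0 i)%:~R.
Proof. by rewrite /E8_form rmorph_sum; apply: eq_bigr => i _; rewrite !mxE rmorphM. Qed.

Lemma in_E8_intr (u : 'rV[int]_8) :
  (2 %| \sum_i u ord0 i * u ord0 i)%Z -> in_E8 (map_mx intr u).
Proof.
move=> even_norm; split; first by left=> i; rewrite mxE intr_int.
have /dvdzP[k sum_u] : (2 %| \sum_i u ord0 i)%Z.
  by rewrite -(rpredBl _ even_norm) dvdz2_sum_sqr_sub.
rewrite (eq_bigr (fun i => (u ord0 i)%:~R)) => [|i _]; last by rewrite mxE.
by rewrite -rmorph_sum sum_u rmorphM /= mulfK ?intr_int.
Qed.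

Theorem lemma2p2 (n : nat) (hn : (0 < n)%N) :
  exists v w : 'rV[rat]_8,
    [/\ in_E8 v, in_E8 w,
        E8_form v v = (2 * n)%:R,
        E8_form w w = (2 * n)%:R &
        E8_form v w = (2 * n)%:R - 1].
Proof.
have [a [b [c [d sum_abcd]]]] := four_squares (2 * n).-1.
pose u := \row_(i < 8) [:: a; b; c; d; 1; 0; 0; 0]`_i.
pose w := \row_(i < 8) [:: a; b; c; d; 0; 1; 0; 0]`_i.
have norm_u : \sum_i u ord0 i * u ord0 i = (2 * n)%:Z.
  by rewrite !big_ord_recl big_ord0 !mxE /=; lia.
have norm_w : \sum_i w ord0 i * w ord0 i = (2 * n)%:Z.
  by rewrite !big_ord_recl big_ord0 !mxE /=; lia.
have dot_uw : \sum_i u ord0 i * w ord0 i = (2 * n)%:Z - 1.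
  by rewrite !big_ord_recl big_ord0 !mxE /=; lia.
have even_2n : (2 %| (2 * n)%:Z)%Z by apply/dvdzP; exists n%:Z; lia.
exists (map_mx intr u), (map_mx intr w); rewrite !E8_form_intr norm_u norm_w dot_uw rmorphB.
by split=> //; apply: in_E8_intr; rewrite ?norm_u ?norm_w.
Qed.
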